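(* Let $u\neq0$, $v$ be parameters and let $\mathrm{e}(y\mathrm{T}_{u^{-1}}\mathbf{D}_{s,t},v)=\sum_{n\ge0}v^{\binom{n}{2}}\frac{y^n}{\{n\}_{s,t}!}(\mathrm{T}_{u^{-1}}\mathbf{D}_{s,t})^n$, acting on the variable $x$. Then (1) for every $\alpha$ (with the convention $\mathbf{D}_{s,t}x^{\beta}=\{\beta\}_{s,t}x^{\beta-1}$ for all exponents $\beta$), as formal series in $y$, $$\mathrm{e}(y\mathrm{T}_{u^{-1}}\mathbf{D}_{s,t},v)\,\big\{u^{\binom{\alpha}{2}}x^{\alpha}\big\}=(x\oplus_{u,v}y)_{s,t}^{(\alpha)};$$ (2) $\mathrm{e}(y\mathrm{T}_{u^{-1}}\mathbf{D}_{s,t},v)\exp_{s,t}(x,u)=\exp_{s,t}(x\oplus_{u,v}y)$, where $\exp_{s,t}(x,u)=\sum_{n\ge0}u^{\binom n2}\frac{x^n}{\{n\}_{s,t}!}$ and $\exp_{s,t}(x\oplus_{u,v}y)=\sum_{n\ge0}\frac{(x\oplus_{u,v}y)^{(n)}_{s,t}}{\{n\}_{s,t}!}$.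
   Context: Let $s,t$ be nonzero reals with $s^2+4t\neq0$, $\varphi=\frac{s+\sqrt{s^2+4t}}{2}$, $\varphi'=\frac{s-\sqrt{s^2+4t}}{2}$, and for a complex exponent $\beta$ (fixed branch of powers) $\{\beta\}_{s,t}=\frac{\varphi^\beta-\varphi'^\beta}{\varphi-\varphi'}$; $\{n\}_{s,t}!=\{1\}_{s,t}\cdots\{n\}_{s,t}$, $\{0\}_{s,t}!=1$; $\left\{{\alpha\atop k}\right\}_{s,t}=\frac{\{\alpha\}_{s,t}\{\alpha-1\}_{s,t}\cdots\{\alpha-k+1\}_{s,t}}{\{k\}_{s,t}!}$; $\binom{\beta}{2}=\beta(\beta-1)/2$. $\mathbf{D}_{s,t}$ is the $(s,t)$-derivative, $\mathbf{D}_{s,t}f(x)=\frac{f(\varphi x)-f(\varphi'x)}{(\varphi-\varphi')x}$, and $\mathrm{T}_af(x)=f(ax)$. The deformed binomial series is $(x\oplus_{u,v}y)_{s,t}^{(\alpha)}=\sum_{n\geq0}\left\{{\alpha\atop n}\right\}_{s,t}u^{\binom{\alpha-n}{2}}v^{\binom{n}{2}}x^{\alpha-n}y^n$. *)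

From mathcomp Require Import all_boot all_order all_algebra.
From mathcomp Require Import all_classical all_reals all_analysis.
From mathcomp Require Export complex.
Export GRing.Theory Num.Theory.

Set Implicit Arguments.
Unset Strict Implicit.
Unset Printing Implicit Defensive.

Local Open Scope ring_scope.
Local Open Scope complex_scope.

Section Defs.
Variable R : realType.
Local Notation C := R[i].

(* complex exponential and principal logarithm, argument in (-pi, pi] *)
Definition cexp (z : C) : C :=
  (expR (complex.Re z))%:C * ((cos (complex.Im z))%:C + 'i * (sin (complex.Im z))%:C).

Definition cmod (z : C) : R := Num.sqrt (complex.Re z ^+ 2 + complex.Im z ^+ 2).

Definition carg (z : C) : R :=
  if 0 <= complex.Im z then acos (complex.Re z / cmod z)
  else - acos (complex.Re z / cmod z).

Definition cLog (z : C) : C := (ln (cmod z))%:C + 'i * (carg z)%:C.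

Definition cpow (z beta : C) : C := if z == 0 then 0 else cexp (beta * cLog z).

Definition cbin2 (beta : C) : C := beta * (beta - 1) / 2%:R.

Definition sqdisc (s t : R) : C :=
  let d := s ^+ 2 + 4%:R * t in
  if 0 <= d then (Num.sqrt d)%:C else 'i * (Num.sqrt (- d))%:C.

Definition phi (s t : R) : C := (s%:C + sqdisc s t) / 2%:R.
Definition phi' (s t : R) : C := (s%:C - sqdisc s t) / 2%:R.

Definition stnum (s t : R) (beta : C) : C :=
  (cpow (phi s t) beta - cpow (phi' s t) beta) / (phi s t - phi' s t).

Definition stfact (s t : R) (n : nat) : C := \prod_(k < n) stnum s t (k.+1)%:R.

Definition stbinom (s t : R) (alpha : C) (k : nat) : C :=
  (\prod_(i < k) stnum s t (alpha - i%:R)) / stfact s t k.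

(* A formal (generalized) series in x, sum_delta F(delta) x^delta, is
   represented by its coefficient function F : C -> C (delta ranges over
   all complex exponents).  A formal power series in y with such coefficients
   is a function nat -> (C -> C). *)
Definition xser := C -> C.

Definition mono (c gamma : C) : xser := fun delta => if delta == gamma then c else 0.

Definition Dst (s t : R) (F : xser) : xser :=
  fun delta => stnum s t (delta + 1) * F (delta + 1).

(* T_{u^{-1}} : x^delta |-> (u^{-1} x)^delta = u^{-delta} x^delta *)
Definition Tinv (u : C) (F : xser) : xser := fun delta => cpow u (- delta) * F delta.

(* e(y T_{u^{-1}} D_{s,t}, v) F : the coefficient of y^n is
   v^binom(n,2) / {n}! (T_{u^{-1}} D_{s,t})^n F *)
Definition eop (s t : R) (u v : C) (F : xser) : nat -> xser :=
  fun n delta =>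
    v ^+ 'C(n, 2) / stfact s t n * iter n (fun G => Tinv u (Dst s t G)) F delta.

(* (x (+)_{u,v} y)^{(alpha)}_{s,t}: coefficient of y^n *)
Definition defbinom (s t : R) (u v alpha : C) : nat -> xser :=
  fun n => mono (stbinom s t alpha n * cpow u (cbin2 (alpha - n%:R)) * v ^+ 'C(n, 2))
                (alpha - n%:R).

(* sum of a family of scalars in which only finitely many terms are nonzero
   (formal summation of a locally finite family); 0 if not locally finite *)
Definition lfsum (a : nat -> C) : C :=
  match pselect (exists N : nat, forall n, (N <= n)%N -> a n = 0) with
  | left H => \sum_(n < projT1 (cid H)) a n
  | right _ => 0
  end.

Definition expst (s t : R) (u : C) : xser :=
  fun delta => lfsum (fun n => mono (u ^+ 'C(n, 2) / stfact s t n) n%:R delta).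

Definition expoplus (s t : R) (u v : C) : nat -> xser :=
  fun m delta => lfsum (fun n => defbinom s t u v n%:R m delta / stfact s t n).

End Defs.

(* Each application of [T_{u^-1} D_{s,t}] lowers the exponent of x by one and
   multiplies the coefficient of x^(b-1) by u^(-(b-1)) {b}_{s,t}.  Applied n times
   to u^binom(a,2) x^a it yields {a}{a-1}...{a-n+1} u^binom(a-n,2) x^(a-n), since
   binom(a,2) - ((a-1) + ... + (a-n)) = binom(a-n,2); this is part (1).  Part (2)
   follows by applying (1) with a = n to each term u^binom(n,2) x^n / {n}! of
   exp_{s,t}(x,u), the operator acting coefficientwise. *)
From mathcomp Require Import all_boot all_order all_algebra.
From mathcomp Require Import all_classical all_reals all_analysis.
From mathcomp Require Import complex.
From mathcomp Require Import ring lra.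
Import Order.TTheory GRing.Theory Num.Theory.

Set Implicit Arguments.
Unset Strict Implicit.
Unset Printing Implicit Defensive.

Local Open Scope ring_scope.
Local Open Scope complex_scope.

Section Powers.
Variable R : realType.
Local Notation C := R[i].

Lemma cexpD (a b : C) : cexp a * cexp b = cexp (a + b).
Proof.
case: a => a1 a2; case: b => b1 b2; rewrite /cexp /= expRD cosD sinD.
by apply/eqP; rewrite eq_complex /=; apply/andP; split; apply/eqP; ring.
Qed.

Lemma cexp0 : cexp (0 : C) = 1.
Proof.
rewrite /cexp /= expR0 cos0 sin0.
by apply/eqP; rewrite eq_complex /=; apply/andP; split; apply/eqP; ring.
Qed.

Lemma cmod_sqr (a b : R) : cmod (a +i* b) ^+ 2 = a ^+ 2 + b ^+ 2.
Proof. by rewrite sqr_sqrtr // addr_ge0 ?sqr_ge0. Qed.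

Lemma cmod_gt0 (z : C) : z != 0 -> 0 < cmod z.
Proof.
case: z => a b; rewrite eq_complex /= negb_and => nz.
rewrite sqrtr_gt0 -[_ + _]/(a ^+ 2 + b ^+ 2).
have [a0|b0] := orP nz.
  by rewrite ltr_pwDl ?sqr_ge0 // exprn_even_gt0.
by rewrite ltr_pwDr ?sqr_ge0 // exprn_even_gt0.
Qed.

Lemma cLogK (z : C) : z != 0 -> cexp (cLog z) = z.
Proof.
move=> nz; have : 0 < cmod z by exact: cmod_gt0.
case: z nz => a b _; set m := cmod _ => m0.
have m2 : m ^+ 2 = a ^+ 2 + b ^+ 2 by exact: cmod_sqr.
have bnd : -1 <= a / m <= 1.
  have : (a / m) ^+ 2 <= 1.
    by rewrite expr_div_n ler_pdivrMr ?exprn_gt0 // mul1r m2; nra.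
  by move=> h; apply/andP; split; nra.
have cA : cos (acos (a / m)) = a / m by case: (acos_def bnd).
have sA : sin (acos (a / m)) = `|b| / m.
  rewrite sin_acos //.
  have -> : 1 - (a / m) ^+ 2 = (b / m) ^+ 2.
    by rewrite !expr_div_n m2; field; rewrite -m2 expf_neq0 // lt0r_neq0.
  by rewrite sqrtr_sqr normrM (gtr0_norm (x := m^-1)) // invr_gt0.
rewrite /cexp /cLog /carg /= !(mul0r, mul1r, subr0, addr0, add0r) lnK ?posrE // -/m.
case: ifP => hb; rewrite ?cosN ?sinN cA sA.
  rewrite ger0_norm //.
  by apply/eqP; rewrite eq_complex /=; apply/andP; split; apply/eqP;
    field; apply/eqP => h; lra.
rewrite ltr0_norm; last by rewrite ltNge hb.
by apply/eqP; rewrite eq_complex /=; apply/andP; split; apply/eqP;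
  field; apply/eqP => h; lra.
Qed.

Variable u : C.
Hypothesis u_neq0 : u != 0.

Lemma cpowE (z : C) : cpow u z = cexp (z * cLog u).
Proof. by rewrite /cpow (negbTE u_neq0). Qed.

Lemma cpowD (a b : C) : cpow u a * cpow u b = cpow u (a + b).
Proof. by rewrite !cpowE cexpD mulrDl. Qed.

Lemma cpow_nat n : cpow u n%:R = u ^+ n.
Proof.
elim: n => [|n IH]; first by rewrite cpowE mul0r cexp0.
by rewrite -natr1 -cpowD IH exprSr cpowE mul1r cLogK.
Qed.

End Powers.

Lemma cbin2_nat (R : realType) n : cbin2 (n%:R : R[i]) = 'C(n, 2)%:R.
Proof.
elim: n => [|n IH]; first by rewrite /cbin2 !mul0r.
by rewrite binS bin1 natrD -IH /cbin2 -natr1; field.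
Qed.

Lemma cbin2_subr1 (R : realType) (x : R[i]) : cbin2 (x - 1) = cbin2 x - (x - 1).
Proof. by rewrite /cbin2; field. Qed.

Section LocallyFiniteSum.
Variable R : realType.
Local Notation C := R[i].

Lemma lfsum_bound (a : nat -> C) N :
  (forall n, (N <= n)%N -> a n = 0) -> lfsum a = \sum_(n < N) a n.
Proof.
move=> aN; rewrite /lfsum; case: pselect => [H|[]]; last by exists N.
case: (cid H) => M aM /=.
suff sum_cut K L : (forall n, (K <= n)%N -> a n = 0) -> (K <= L)%N ->
    \sum_(n < L) a n = \sum_(n < K) a n.
  have [NM|/ltnW MN] := leqP N M; first by rewrite (sum_cut N M).
  by rewrite (sum_cut M N).
move=> aK KL; rewrite -!(big_mkord xpredT) (big_cat_nat (leq0n K) KL) /=.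
by rewrite [X in _ + X]big1_seq ?addr0 // => n /andP[_]; rewrite mem_index_iota => /andP[/aK].
Qed.

Lemma lfsum_not_finite (a : nat -> C) :
  ~ (exists N, forall n, (N <= n)%N -> a n = 0) -> lfsum a = 0.
Proof. by move=> nfin; rewrite /lfsum; case: pselect. Qed.

Lemma lfsumZ (c : C) (a : nat -> C) : lfsum (fun n => c * a n) = c * lfsum a.
Proof.
case: (pselect (exists N, forall n, (N <= n)%N -> a n = 0)) => [[N aN]|nfin].
  rewrite (lfsum_bound aN) (@lfsum_bound _ N) ?mulr_sumr // => n /aN ->.
  by rewrite mulr0.
rewrite (lfsum_not_finite nfin) mulr0.
have [->|c0] := eqVneq c 0.
  by rewrite (@lfsum_bound _ 0) ?big_ord0 // => n _; rewrite mul0r.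
apply: lfsum_not_finite => -[N caN]; apply: nfin; exists N => n /caN /eqP.
by rewrite mulf_eq0 (negbTE c0) => /eqP.
Qed.

End LocallyFiniteSum.

Section Operator.
Variable R : realType.
Local Notation C := R[i].
Variables (s t : R) (u v : C).

(* The scalar by which [(T_{u^-1} D_{s,t})^m] multiplies the coefficient of
   x^(d + m) when moving it to x^d. *)
Definition TDprod (m : nat) (d : C) : C :=
  \prod_(i < m) (cpow u (- (d + i%:R)) * stnum s t (d + i%:R + 1)).

Lemma TDprod_recl m d :
  TDprod m.+1 d = cpow u (- d) * stnum s t (d + 1) * TDprod m (d + 1).
Proof.
rewrite /TDprod big_ord_recl /= addr0; congr (_ * _).
apply: eq_bigr => i _; rewrite /bump /= add1n -natr1.
by congr (cpow u _ * stnum s t _); ring.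
Qed.

Lemma iter_TinvDst m F d :
  iter m (fun G => Tinv u (Dst s t G)) F d = TDprod m d * F (d + m%:R).
Proof.
elim: m d => [|m IH] d; first by rewrite /TDprod big_ord0 mul1r addr0.
rewrite iterS /Tinv /Dst IH TDprod_recl -natr1 !mulrA.
by congr (_ * F _); ring.
Qed.

Lemma eopE F m d :
  eop s t u v F m d = v ^+ 'C(m, 2) / stfact s t m * TDprod m d * F (d + m%:R).
Proof. by rewrite /eop iter_TinvDst mulrA. Qed.

Hypothesis u_neq0 : u != 0.

Lemma TDprod_cpow_cbin2 m (alpha : C) :
  TDprod m (alpha - m%:R) * cpow u (cbin2 alpha) =
  (\prod_(i < m) stnum s t (alpha - i%:R)) * cpow u (cbin2 (alpha - m%:R)).
Proof.
elim: m => [|m IH]; first by rewrite /TDprod !big_ord0 subr0.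
have -> : alpha - m.+1%:R = alpha - m%:R - 1 by rewrite -natr1; ring.
rewrite TDprod_recl subrK -mulrA IH big_ord_recr /= cbin2_subr1 -cpowD //.
by ring.
Qed.

Lemma eop_mono_cbin2 alpha :
  eop s t u v (mono (cpow u (cbin2 alpha)) alpha) = defbinom s t u v alpha.
Proof.
apply: funext => m; apply: funext => d; rewrite eopE /defbinom /mono.
have [->|ne] := eqVneq d (alpha - m%:R).
  by rewrite subrK eqxx -mulrA TDprod_cpow_cbin2 /stbinom; ring.
rewrite ifN ?mulr0 //; apply: contra ne => /eqP <-.
by rewrite addrK.
Qed.

Lemma eop_expst : eop s t u v (expst s t u) = expoplus s t u v.
Proof.
apply: funext => m; apply: funext => d.
rewrite /expoplus eopE /expst -lfsumZ.
apply: congr1; apply: funext => n.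
rewrite -(eop_mono_cbin2 n%:R) eopE cbin2_nat (cpow_nat u_neq0) /mono.
by case: ifP => _; rewrite ?mulr0 ?mul0r //; ring.
Qed.

End Operator.

Theorem mainTheorem5 (R : realType) (s t : R) (u v : R[i]) :
  s != 0 -> t != 0 -> s ^+ 2 + 4%:R * t != 0 -> u != 0 ->
  (forall alpha : R[i],
     eop s t u v (mono (cpow u (cbin2 alpha)) alpha) = defbinom s t u v alpha)
  /\ eop s t u v (expst s t u) = expoplus s t u v.
Proof.
move=> _ _ _ u_neq0; split; first exact: eop_mono_cbin2.
exact: eop_expst.
Qed.
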